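(* For every finite graph $G$, \[\mathrm{VCdim}(G)\le 8\,\mathrm{fw}_1(G)\quad\text{and}\quad \mathrm{2VCdim}(G)\le 8\,\mathrm{fw}_2(G)+2.\]
   Context: Graphs are finite, simple, undirected; $N(v)$ is the (open) neighbourhood of $v$. $\mathrm{VCdim}(G)$ is the largest size of a set $X\subseteq V(G)$ with $\{N(v)\cap X: v\in V(G)\}=2^X$. $\mathrm{2VCdim}(G)$ is the largest size of a set $X\subseteq V(G)$ such that for every two distinct $a,b\in X$ there is $c\in V(G)$ with $N(c)\cap X=\{a,b\}$. A $k$-flip of $G$ is a graph obtained by choosing a partition $\mathcal P$ of $V(G)$ with at most $k$ parts and, for some pairs $A,B$ of (possibly equal) parts, inverting the adjacency of every pair of distinct vertices $x\in A$, $y\in B$. Flipper game of radius $r$ and width $k$: $G_0=G$, runner chooses $v_0$; in round $i\ge1$ the flipper announces a $k$-flip $G_i$ of $G$, then the runner moves from $v_{i-1}$ to $v_i$ along a path of length at most $r$ in $G_{i-1}$; the flipper wins if $v_i$ is isolated in $G_i$. $\mathrm{fw}_r(G)$ is the least $k$ for which the flipper has a winning strategy. *)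

(* Graphs: a finite type T with an adjacency relation G : rel T
   (the theorem assumes G symmetric and irreflexive). *)
From mathcomp Require Import all_boot.
From mathcomp Require Import boolp.
Set Implicit Arguments. Unset Strict Implicit. Unset Printing Implicit Defensive.

Section Defs.
Variable T : finType.

Definition nbhd (G : rel T) (v : T) : {set T} := [set u | G v u].

Definition shattered (G : rel T) (X : {set T}) : Prop :=
  forall Y : {set T}, Y \subset X -> exists v, nbhd G v :&: X = Y.

Definition VCdim (G : rel T) : nat :=
  \max_(X : {set T} | `[< shattered G X >]) #|X|.

Definition pair_shattered (G : rel T) (X : {set T}) : Prop :=
  forall a b, a \in X -> b \in X -> a != b ->
    exists c, nbhd G c :&: X = [set a; b].

Definition twoVCdim (G : rel T) : nat :=
  \max_(X : {set T} | `[< pair_shattered G X >]) #|X|.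

(* k-flip: the partition into at most k parts is given by f : T -> 'I_k
   (parts = nonempty fibres), F : rel 'I_k symmetric selects the (unordered)
   pairs of parts whose adjacency is inverted. *)
Definition flip (k : nat) (G : rel T) (f : T -> 'I_k) (F : rel 'I_k) : rel T :=
  fun x y => (x != y) && (G x y (+) F (f x) (f y)).

Definition isolated (H : rel T) (v : T) : Prop := forall w, ~~ H v w.

(* Flipper game of radius r and width k, played on G.
   fwin r k G H v : the flipper wins from the position where the current graph
   is H (= G_{i-1}) and the runner stands at v (= v_{i-1}). *)
Inductive fwin (r k : nat) (G : rel T) : rel T -> T -> Prop :=
| fwin_step (H : rel T) (v : T) (f : T -> 'I_k) (F : rel 'I_k) :
    symmetric F ->
    (forall p : seq T, size p <= r -> path H v p ->
       isolated (flip G f F) (last v p) \/ fwin r k G (flip G f F) (last v p)) ->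
    fwin r k G H v.

Definition flipper_wins (r k : nat) (G : rel T) : Prop :=
  forall v0 : T, fwin r k G G v0.

Lemma fw_exists_bool (r : nat) (G : rel T) :
  (exists k, flipper_wins r k G) -> exists k, `[< flipper_wins r k G >].
Proof. by case=> k Hk; exists k; apply: asboolT. Qed.

(* fw_r(G): least width k for which the flipper wins (0 if none; such k
   always exists for finite graphs) *)
Definition fw (r : nat) (G : rel T) : nat :=
  match pselect (exists k, flipper_wins r k G) with
  | left h => ex_minn (fw_exists_bool h)
  | right _ => 0
  end.

End Defs.

(* Radius 1.  If X is shattered and |X| = 8k + 1, the runner stays on vertices
   that are heavy (more than k neighbours in X) or escape (have a heavy
   neighbour whatever the next flip).  Two of the more than k X-neighbours of a
   heavy vertex share a part of the next flip, and they cannot both be trapped,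
   i.e. have no heavy neighbour after flips (g1, P1), (g2, P2) respectively:
   shattering yields a vertex w whose trace on X
   contains exactly one of them, differs from the trace of y, and lies at
   Hamming distance more than k + 1 from each of the 2k sets {z | P t (g z)}.
   Then w is adjacent after the flip to one of the two, and heavy after either
   trapping flip.  Such a w exists by counting: 2^(8k-1) candidate traces
   against 2k Hamming balls of radius k + 1.

   Radius 2.  If X is 2-shattered and |X| >= 4k + 3, the runner stays on
   vertices from which more than k points of X are reachable by walks of length
   two.  If two such points x, y in one part both failed, each part would hold
   at most two points of X unreachable from x and y: the vertex c with
   N(c) ∩ X = {x, b} is adjacent after the flip to x or to y, and to exactly one
   of b and any z <> c of b's part.  Hence |X| <= 2k + (k + k + 2). *)

From mathcomp Require Import all_boot zify boolp.
Set Implicit Arguments. Unset Strict Implicit. Unset Printing Implicit Defensive.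

Lemma sum_bin_exp3_leq_exp4 n r : r <= n ->
  (\sum_(i < r.+1) 'C(n, i)) * 3 ^ (n - r) <= 4 ^ n.
Proof.
move=> le_rn.
have -> : 4 ^ n = \sum_(i < n.+1) 'C(n, i) * 3 ^ (n - i).
  by rewrite -[4]/(3 + 1) expnDn; apply: eq_bigr => i _; rewrite exp1n muln1.
rewrite big_distrl (big_ord_widen n.+1 (fun i => 'C(n, i) * 3 ^ (n - r))) ?ltnS //.
rewrite big_mkcond /=; apply: leq_sum => i _.
case: ifP => // le_ir; rewrite leq_mul2l leq_pexp2l ?leq_sub2l ?orbT //.
Qed.

Lemma sum_bin_lt_exp2 k : 0 < k ->
  2 * k * \sum_(i < k.+2) 'C(8 * k + 1, i) + 1 < 2 ^ (8 * k - 1).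
Proof.
move=> k_gt0; have [->|k_neq1] := eqVneq k 1; first by rewrite !big_ord_recr big_ord0.
have k_ge2 : 2 <= k by lia.
set V := \sum_(i < _) _.
(* V <= 4^(8k+1) / 3^(7k), and 3^7 > 8 * 2^8 leaves room for the factor 32 k. *)
have bin_le : V * 2187 ^ k <= 4 * (256 ^ k * 256 ^ k).
  have -> : 2187 ^ k = 3 ^ (8 * k + 1 - k.+1).
    by rewrite (_ : _ - _ = 7 * k) ?expnM //; lia.
  have -> : 4 * (256 ^ k * 256 ^ k) = 4 ^ (8 * k + 1).
    by rewrite -expnMn expnD expnM mulnC.
  by apply: sum_bin_exp3_leq_exp4; lia.
have exp2_half : 2 ^ (8 * k - 1) * 2 = 256 ^ k.
  by rewrite -expnSr (_ : (8 * k - 1).+1 = 8 * k) ?expnM //; lia.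
have lin_le : 32 * k * 256 ^ k <= 2187 ^ k.
  have lin_exp : 32 * k <= 8 ^ k.
    elim: k k_ge2 {k_gt0 k_neq1 V bin_le exp2_half} => // k IH.
    rewrite leq_eqVlt => /orP[/eqP <- // | /[dup] k_ge2 /IH le32]; rewrite expnS; lia.
  apply: leq_trans (_ : 8 ^ k * 256 ^ k <= _); first by rewrite leq_mul2r lin_exp orbT.
  by rewrite -expnMn leq_exp2r //; lia.
have big_pos : 4 < 256 ^ k by rewrite (leq_trans _ (leq_pexp2l _ k_gt0)).
move: bin_le exp2_half lin_le big_pos.
set W := 2 ^ _; set P := 256 ^ k; set Q := 2187 ^ k => bin_le exp2_half lin_le big_pos.
have Q_gt0 : 0 < Q by rewrite expn_gt0.
rewrite -(ltn_pmul2r Q_gt0); nia.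
Qed.

Lemma card_bigcup_le (T : finType) (I : Type) (r : seq I) (P : pred I) (F : I -> {set T}) :
  #|\bigcup_(i <- r | P i) F i| <= \sum_(i <- r | P i) #|F i|.
Proof.
elim/big_rec2: _ => [|i n U _ le_Un]; first by rewrite cards0.
by rewrite (leq_trans (leq_card_setU _ _).1) ?leq_add2l.
Qed.

Section FiniteSets.
Variable T : finType.
Implicit Types (A B U X Y Z : {set T}) (x y : T).

Lemma card_le_fibres k (f : T -> 'I_k) A m :
  (forall t, #|[set z in A | f z == t]| <= m) -> #|A| <= k * m.
Proof.
move=> fibre_le.
apply: leq_trans (_ : #|\bigcup_(t < k) [set z in A | f z == t]| <= _).
  apply/subset_leq_card/subsetP => z zA.
  by apply/bigcupP; exists (f z); rewrite ?inE ?zA ?eqxx.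
apply: leq_trans (card_bigcup_le _ _ _) _.
apply: leq_trans (_ : \sum_(t < k) m <= _); first exact: leq_sum.
by rewrite sum_nat_const card_ord.
Qed.

Lemma exists_subset_card A m : m <= #|A| -> exists2 B : {set T}, B \subset A & #|B| = m.
Proof.
move=> le_mA.
have /card_gt0P[B] : 0 < #|[set B : {set T} | B \subset A & #|B| == m]|.
  by rewrite cards_draws bin_gt0.
by rewrite inE => /andP[BA /eqP cardB]; exists B.
Qed.

Definition symdiff A B := (A :\: B) :|: (B :\: A).

Lemma in_symdiff z A B : (z \in symdiff A B) = (z \in A) (+) (z \in B).
Proof. by rewrite !inE; case: (z \in A); case: (z \in B). Qed.

Lemma symdiffK B : cancel (symdiff^~ B) (symdiff^~ B).
Proof. by move=> A; apply/setP => z; rewrite !in_symdiff addbK. Qed.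

Definition hamming_ball X U r := [set Y in powerset X | #|symdiff Y U| <= r].

Lemma card_hamming_ball X U r :
  U \subset X -> #|hamming_ball X U r| <= \sum_(i < r.+1) 'C(#|X|, i).
Proof.
move=> UX; rewrite -(card_imset _ (can_inj (symdiffK U))).
apply: leq_trans (_ : #|\bigcup_(i < r.+1) [set D : {set T} | D \subset X & #|D| == i]| <= _).
  apply/subset_leq_card/subsetP => D /imsetP[Y]; rewrite !inE => /andP[YX le_r] ->.
  apply/bigcupP; exists (Ordinal (le_r : #|symdiff Y U| < r.+1)) => //.
  rewrite !inE eqxx andbT; apply/subsetP => z; rewrite in_symdiff.
  by case: (boolP (z \in Y)) => [/(subsetP YX) | _ /(subsetP UX)].
apply: leq_trans (card_bigcup_le _ _ _) _.
by apply: leq_sum => i _; rewrite cards_draws.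
Qed.

Lemma card_separating_subsets_ge X x y : x \in X -> y \in X -> x != y ->
  2 ^ (#|X| - 2) <= #|[set Y in powerset X | (x \in Y) && (y \notin Y)]|.
Proof.
move=> xX yX neq_xy; set R := X :\: [set x; y].
have card_R : #|R| = #|X| - 2.
  rewrite cardsD (setIidPr _) ?cards2 ?neq_xy //.
  by apply/subsetP => z; rewrite !inE => /orP[] /eqP ->.
have x_notin : forall Z, Z \subset R -> x \notin Z.
  by move=> Z /subsetP sZR; apply/negP => /sZR; rewrite !inE eqxx.
have inj : {in powerset R &, injective (fun Z => x |: Z)}.
  move=> Z1 Z2; rewrite !inE => /x_notin x1 /x_notin x2 eqZ.
  by rewrite -(setU1K x1) eqZ setU1K.
rewrite -card_R -card_powerset -(card_in_imset inj).
apply/subset_leq_card/subsetP => Y /imsetP[Z]; rewrite powersetE => sZR ->.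
rewrite !inE eqxx /=; apply/andP; split.
  apply/subsetP => z; rewrite !inE => /orP[/eqP -> // | /(subsetP sZR)].
  by rewrite inE => /andP[].
rewrite negb_or eq_sym neq_xy; apply/negP => /(subsetP sZR).
by rewrite !inE eqxx orbT.
Qed.

Lemma exists_far_subset k X x y Z (I : finType) (U : I -> {set T}) :
  0 < k -> #|X| = 8 * k + 1 -> x \in X -> y \in X -> x != y ->
  #|I| <= 2 * k -> (forall i, U i \subset X) ->
  exists Y, [/\ Y \subset X, x \in Y, y \notin Y, Y != Z &
                forall i, k.+1 < #|symdiff Y (U i)|].
Proof.
move=> k_gt0 card_X xX yX neq_xy card_I sub_U.
set V := \sum_(i < k.+2) 'C(8 * k + 1, i).
pose Near := \bigcup_i hamming_ball X (U i) k.+1 :|: [set Z].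
have card_Near : #|Near| <= 2 * k * V + 1.
  rewrite (leq_trans (leq_card_setU _ _).1) // cards1 leq_add2r.
  apply: leq_trans (card_bigcup_le _ _ _) _.
  apply: leq_trans (_ : \sum_i V <= _).
    by apply: leq_sum => i _; rewrite /V -card_X card_hamming_ball.
  by rewrite sum_nat_const leq_mul2r card_I orbT.
have [Y] : exists2 Y, Y \in [set Y in powerset X | (x \in Y) && (y \notin Y)] & Y \notin Near.
  apply/exists_inP; rewrite -negb_forall_in; apply/negP => /forall_inP sub_Near.
  have := leq_trans (card_separating_subsets_ge xX yX neq_xy)
    (leq_trans (subset_leq_card (introT subsetP sub_Near)) card_Near).
  rewrite card_X (_ : 8 * k + 1 - 2 = 8 * k - 1); last lia.
  by rewrite leqNgt (sum_bin_lt_exp2 k_gt0).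
rewrite /Near !inE => /andP[YX /andP[xY yY]] /norP[far neq_YZ].
exists Y; split => // i; rewrite ltnNge; apply: contra far => near.
by apply/bigcupP; exists i; rewrite // inE powersetE YX.
Qed.

End FiniteSets.

Section Flips.
Variable T : finType.
Implicit Types (G H : rel T) (X Y : {set T}).

Lemma nbhd_setI_adj G w X Y u : nbhd G w :&: X = Y -> u \in X -> G w u = (u \in Y).
Proof. by move=> <- uX; rewrite !inE uX andbT. Qed.

Lemma nbhd_flip_setI k G (f : T -> 'I_k) (F : rel 'I_k) w X :
  nbhd (flip G f F) w :&: X =
  symdiff (nbhd G w :&: X) [set z in X | F (f w) (f z)] :\ w.
Proof.
apply/setP => z; rewrite !inE /flip eq_sym.
by case: (z \in X) (G w z) (F (f w) (f z)) => [] [] []; rewrite ?andbF ?andbT.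
Qed.

Lemma shattered_subset G X Y : shattered G X -> Y \subset X -> shattered G Y.
Proof.
move=> shX YX Z ZY; have [v nbv] := shX Z (subset_trans ZY YX).
by exists v; rewrite -(setIidPr YX) setIA nbv (setIidPl ZY).
Qed.

Lemma fwin_width0 r G H v : ~ fwin r 0 G H v.
Proof. by case=> {}H {}v f; case: (f v). Qed.

Lemma runner_invariant_not_fwin r k G (P : rel T -> T -> Prop) :
  (forall H v (f : T -> 'I_k) (F : rel 'I_k), symmetric F -> P H v ->
     exists p, [/\ size p <= r, path H v p, ~ isolated (flip G f F) (last v p)
                 & P (flip G f F) (last v p)]) ->
  forall H v, P H v -> ~ fwin r k G H v.
Proof.
move=> runner_moves; rewrite /not; fix IH 4 => H v PHv win.
case: win PHv => {}H {}v f F symF flipper_moves PHv.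
have [p [size_p path_p not_iso P_last]] := runner_moves H v f F symF PHv.
by case: (flipper_moves p size_p path_p) => [/not_iso | /(IH _ _ P_last)].
Qed.

Lemma flipper_wins_card r G : symmetric G -> flipper_wins r #|T| G.
Proof.
move=> symG v0; apply: (@fwin_step _ _ _ _ _ _ enum_rank
  (fun i j => G (enum_val i) (enum_val j))) => [i j | p _ _]; first exact: symG.
by left => w; rewrite /flip !enum_rankK addbb andbF.
Qed.

Lemma flipper_wins_fw r G : symmetric G -> flipper_wins r (fw r G) G.
Proof.
move=> symG; rewrite /fw; case: pselect => [? | []]; last first.
  by exists #|T|; apply: flipper_wins_card.
by case: ex_minnP => m /asboolP.
Qed.

End Flips.

Section RadiusOne.
Variables (T : finType) (G : rel T) (X : {set T}) (k : nat).
Hypotheses (symG : symmetric G) (irrG : irreflexive G) (shX : shattered G X).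
Hypotheses (card_X : #|X| = 8 * k + 1) (k_gt0 : 0 < k).

Definition heavy (H : rel T) (v : T) := k < #|nbhd H v :&: X|.

Definition escapes (H : rel T) (v : T) :=
  forall (f : T -> 'I_k) (F : rel 'I_k), exists w, H v w /\ heavy (flip G f F) w.

Definition trapped (H : rel T) (v : T) :=
  exists (g : T -> 'I_k) (P : rel 'I_k), forall w, H v w -> ~~ heavy (flip G g P) w.

Lemma escapes_or_trapped H v : escapes H v \/ trapped H v.
Proof.
case: (pselect (escapes H v)) => [|/existsNP[g /existsNP[P /forallNP no_heavy]]]; first by left.
right; exists g, P => w Hvw; apply/negP => heavy_w.
exact: no_heavy w (conj Hvw heavy_w).
Qed.

Lemma symdiff_flip_le (g : T -> 'I_k) (P : rel 'I_k) w Y :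
  nbhd G w :&: X = Y -> ~~ heavy (flip G g P) w ->
  #|symdiff Y [set z in X | P (g w) (g z)]| <= k.+1.
Proof.
rewrite /heavy nbhd_flip_setI -leqNgt => -> le_k.
by rewrite (cardsD1 w); move: le_k; case: (w \in _); lia.
Qed.

Lemma same_part_not_trapped (f : T -> 'I_k) (F : rel 'I_k) x y :
  x \in X -> y \in X -> x != y -> f x = f y ->
  trapped (flip G f F) x -> trapped (flip G f F) y -> False.
Proof.
move=> xX yX neq_xy fxy [g1 [P1 trap_x]] [g2 [P2 trap_y]].
pose U (g : T -> 'I_k) (P : rel 'I_k) t := [set z in X | P t (g z)].
pose pattern (i : bool * 'I_k) := if i.1 then U g1 P1 i.2 else U g2 P2 i.2.
have [|i|Y [YX xY yY neq_Y far]] :=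
  @exists_far_subset _ k X x y (nbhd G y :&: X) _ pattern k_gt0 card_X xX yX neq_xy.
- by rewrite card_prod card_bool card_ord.
- by apply/subsetP => z; rewrite /pattern; case: ifP; rewrite inE => _ /andP[].
have [w nb_w] := shX YX.
have adj_w u : u \in X -> G u w = (u \in Y) by move=> uX; rewrite symG (nbhd_setI_adj nb_w).
have neq_wy : w != y by apply: contraNneq neq_Y => <-; rewrite nb_w.
have G_xw : G x w by rewrite adj_w.
have neq_wx : w != x by apply: contraTneq G_xw => ->; rewrite irrG.
have near b : ~~ heavy (flip G (if b then g1 else g2) (if b then P1 else P2)) w -> False.
  move/(symdiff_flip_le nb_w); rewrite leqNgt.
  by case: b (far (b, (if b then g1 else g2) w)) => ->.
case F_xw: (F (f x) (f w)).
- apply: (near false); apply: trap_y.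
  by rewrite /flip eq_sym neq_wy adj_w // (negbTE yY) -fxy F_xw.
- apply: (near true); apply: trap_x.
  by rewrite /flip eq_sym neq_wx adj_w // xY F_xw.
Qed.

Lemma not_flipper_wins1 : ~ flipper_wins 1 k G.
Proof.
move=> win; have [v0 nb_v0] := shX (subxx X).
apply: (@runner_invariant_not_fwin _ 1 k G (fun H v => heavy H v \/ escapes H v)
          _ G v0 _ (win v0)); last by left; rewrite /heavy nb_v0 card_X; lia.
move=> H v f F symF [heavy_v | esc_v].
- pose A := nbhd H v :&: X.
  have [x xA esc_x] : exists2 x, x \in A & escapes (flip G f F) x.
    case: (pselect (exists2 x, x \in A & escapes (flip G f F) x)) => // no_esc.
    have trap u : u \in A -> trapped (flip G f F) u.
      move=> uA; case: (escapes_or_trapped (flip G f F) u) => // esc_u.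
      by case: no_esc; exists u.
    have inj_f : {in A &, injective f}.
      move=> a b aA bA fab; apply: contrapT => /eqP neq_ab.
      move: (aA) (bA); rewrite !inE => /andP[_ aX] /andP[_ bX].
      exact: same_part_not_trapped aX bX neq_ab fab (trap a aA) (trap b bA).
    have := max_card (f @: A); rewrite card_ord card_in_imset //.
    by move: heavy_v; rewrite /heavy -/A; lia.
  have [w [Hxw _]] := esc_x f F.
  exists [:: x]; split => //=; last by right.
    by move: xA; rewrite !inE andbT => /andP[].
  by move/(_ w); rewrite Hxw.
- have [w [Hvw heavy_w]] := esc_v f F.
  have /card_gt0P[z] : 0 < #|nbhd (flip G f F) w :&: X| by apply: leq_ltn_trans heavy_w.
  rewrite !inE => /andP[Hwz _].
  exists [:: w]; split => //=; last by left.
    by rewrite Hvw.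
  by move/(_ z); rewrite Hwz.
Qed.

End RadiusOne.

Section RadiusTwo.
Variables (T : finType) (G : rel T) (X : {set T}) (k : nat).
Hypotheses (symG : symmetric G) (irrG : irreflexive G) (pshX : pair_shattered G X).

Definition reach2 (H : rel T) (v : T) : {set T} :=
  [set z in X | [exists c, H v c && H c z]].

Definition unreached (H : rel T) (x y : T) : {set T} :=
  X :\: (reach2 H x :|: reach2 H y :|: [set x; y]).

Lemma unreached_sub H x y z :
  z \in unreached H x y -> [/\ z \in X, z != x & z != y].
Proof. by rewrite !inE => /andP[/norP[_ /norP[-> ->]] ->]. Qed.

Lemma unreached_path H x y c z :
  z \in unreached H x y -> H x c || H y c -> ~~ H c z.
Proof.
move=> /[dup] /unreached_sub[zX _ _]; rewrite !inE zX /= => /andP[/norP[/norP[nx ny] _] _].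
by case/orP => [Hxc | Hyc]; [apply: contra nx | apply: contra ny] => Hcz;
  apply/existsP; exists c; rewrite ?Hxc ?Hyc.
Qed.

Lemma unreached_same_part (f : T -> 'I_k) (F : rel 'I_k) x y b c z :
  symmetric F -> x \in X -> y \in X -> x != y -> f x = f y ->
  b \in unreached (flip G f F) x y -> z \in unreached (flip G f F) x y ->
  nbhd G c :&: X = [set x; b] -> c != y -> f z = f b -> z != b -> z = c.
Proof.
move=> symF xX yX neq_xy fxy ub uz nb_c neq_cy fzb neq_zb.
have [bX neq_bx neq_by] := unreached_sub ub; have [zX neq_zx _] := unreached_sub uz.
have adj_c u : u \in X -> G c u = (u == x) || (u == b).
  by move=> uX; rewrite (nbhd_setI_adj nb_c) // !inE.
have G_cb : G c b by rewrite adj_c // eqxx orbT.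
have G_cx : G c x by rewrite adj_c // eqxx.
have neq_cb : c != b by apply: contraTneq G_cb => ->; rewrite irrG.
have neq_cx : c != x by apply: contraTneq G_cx => ->; rewrite irrG.
apply: contrapT => /eqP neq_zc.
have flip_cz : flip G f F c z = F (f c) (f b).
  by rewrite /flip eq_sym neq_zc adj_c // (negbTE neq_zx) (negbTE neq_zb) fzb.
have flip_cb : flip G f F c b = ~~ F (f c) (f b).
  by rewrite /flip neq_cb G_cb.
have hit : flip G f F x c || flip G f F y c.
  rewrite /flip eq_sym neq_cx [y == c]eq_sym neq_cy /= !(symG _ c) !adj_c //.
  by rewrite eqxx [y == x]eq_sym (negbTE neq_xy) [y == b]eq_sym (negbTE neq_by) -fxy; case: (F _ _).
have := unreached_path ub hit; have := unreached_path uz hit.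
by rewrite flip_cz flip_cb negbK => /negPf ->.
Qed.

Lemma card_unreached_part_le2 (f : T -> 'I_k) (F : rel 'I_k) x y t :
  symmetric F -> x \in X -> y \in X -> x != y -> f x = f y ->
  #|[set z in unreached (flip G f F) x y | f z == t]| <= 2.
Proof.
move=> symF xX yX neq_xy fxy; set Qt := [set z in _ | _].
have witness b : b \in Qt -> exists c, nbhd G c :&: X = [set x; b].
  rewrite inE => /andP[/unreached_sub[bX neq_bx _] _].
  by apply: pshX; rewrite // eq_sym.
have small b c : b \in Qt -> nbhd G c :&: X = [set x; b] -> c != y -> #|Qt| <= 2.
  rewrite inE => /andP[ub /eqP fb] nb_c neq_cy.
  apply: leq_trans (_ : #|[set b; c]| <= 2); last by rewrite cards2; case: (b != c).
  apply/subset_leq_card/subsetP => z; rewrite inE => /andP[uz /eqP fz].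
  rewrite !inE; have [// | neq_zb] := eqVneq z b.
  by rewrite (unreached_same_part symF xX yX neq_xy fxy ub uz nb_c neq_cy _ neq_zb) ?eqxx // fz fb.
have [-> | [b1 b1Qt]] := set_0Vmem Qt; first by rewrite cards0.
have [c1 nb_c1] := witness b1 b1Qt.
(* At most one b in Qt has y as its witness, as N(y) ∩ X = {x, b} determines b. *)
have [c1y | ] := eqVneq c1 y; last exact: small b1Qt nb_c1.
have [Qt1 | [b2]] := set_0Vmem (Qt :\ b1); first by rewrite (cardsD1 b1) b1Qt Qt1 cards0.
rewrite in_setD1 => /andP[neq_b21 b2Qt]; have [c2 nb_c2] := witness b2 b2Qt.
apply: (small b2 c2 b2Qt nb_c2); move: neq_b21; apply: contra_neq => c2y.
move: b2Qt; rewrite inE => /andP[/unreached_sub[_ neq_b2x _] _].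
have /setP/(_ b2) : [set x; b1] = [set x; b2] by rewrite -nb_c1 -nb_c2 c1y c2y.
by rewrite !inE eqxx orbT (negbTE neq_b2x) => /eqP.
Qed.

Lemma same_part_reach2 (f : T -> 'I_k) (F : rel 'I_k) x y :
  symmetric F -> x \in X -> y \in X -> x != y -> f x = f y -> 4 * k + 3 <= #|X| ->
  (k < #|reach2 (flip G f F) x|) || (k < #|reach2 (flip G f F) y|).
Proof.
move=> symF xX yX neq_xy fxy card_X.
have card_Q := card_le_fibres (fun t => card_unreached_part_le2 t symF xX yX neq_xy fxy).
set H := flip G f F in card_Q *.
rewrite !ltnNge -negb_and; apply/negP => /andP[small_x small_y].
set S := reach2 H x :|: reach2 H y :|: [set x; y].
have card_S : #|S| <= #|reach2 H x| + #|reach2 H y| + 2.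
  rewrite (leq_trans (leq_card_setU _ _).1) // cards2 leq_add //.
    exact: (leq_card_setU _ _).1.
  by case: (x != y).
have := cardsID S X; have := subset_leq_card (subsetIr X S).
rewrite -/(unreached H x y); lia.
Qed.

Lemma not_flipper_wins2 : 4 * k + 3 <= #|X| -> ~ flipper_wins 2 k G.
Proof.
move=> card_X win; have /card_gt0P[x0 x0X] : 0 < #|X| by move: card_X; lia.
apply: (@runner_invariant_not_fwin _ 2 k G (fun H v => k < #|reach2 H v|)
          _ G x0 _ (win x0)).
- move=> H v f F symF large_v.
  have [z zR large_z] : exists2 z, z \in reach2 H v & k < #|reach2 (flip G f F) z|.
    apply/exists_inP; apply: contraT => /exists_inPn small.
    have inj_f : {in reach2 H v &, injective f}.
      move=> a b aR bR fab; apply/eqP; apply: contraT => neq_ab.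
      move: (aR) (bR); rewrite !inE => /andP[aX _] /andP[bX _].
      have := same_part_reach2 symF aX bX neq_ab fab card_X.
      by rewrite (negbTE (small a aR)) (negbTE (small b bR)).
    have := max_card (f @: reach2 H v).
    by rewrite card_ord card_in_imset // leqNgt large_v.
  move: zR; rewrite inE => /andP[_ /existsP[c /andP[Hvc Hcz]]].
  have /card_gt0P[u] : 0 < #|reach2 (flip G f F) z| by apply: leq_ltn_trans large_z.
  rewrite inE => /andP[_ /existsP[c' /andP[Hzc' _]]].
  exists [:: c; z]; split => //=; first by rewrite Hvc Hcz.
  by move/(_ c'); rewrite Hzc'.
- have lt_k : k < #|X :\ x0| by move: card_X; rewrite (cardsD1 x0) x0X; lia.
  apply: leq_trans lt_k (subset_leq_card _); apply/subsetP => b.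
  rewrite !inE => /andP[neq_bx bX]; rewrite bX.
  have [c nb_c] : exists c, nbhd G c :&: X = [set x0; b] by apply: pshX; rewrite // eq_sym.
  by apply/existsP; exists c; rewrite symG !(nbhd_setI_adj nb_c) // !inE !eqxx orbT.
Qed.

End RadiusTwo.

Lemma VCdim_le_fw1 (T : finType) (G : rel T) :
  symmetric G -> irreflexive G -> VCdim G <= 8 * fw 1 G.
Proof.
move=> symG irrG; apply/bigmax_leqP => X /asboolP shX.
rewrite leqNgt; apply/negP => large_X.
have /card_gt0P[v0 _] : 0 < #|X| by apply: leq_ltn_trans large_X.
case: (fw 1 G) large_X (flipper_wins_fw 1 symG) => [_ /(_ v0) /fwin_width0 // | k].
rewrite -addn1 => /exists_subset_card[Y YX card_Y].
exact: not_flipper_wins1 symG irrG (shattered_subset shX YX) card_Y (ltn0Sn k).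
Qed.

Lemma twoVCdim_le_fw2 (T : finType) (G : rel T) :
  symmetric G -> irreflexive G -> twoVCdim G <= 4 * fw 2 G + 2.
Proof.
move=> symG irrG; apply/bigmax_leqP => X /asboolP pshX.
rewrite leqNgt; apply/negP => large_X.
by apply: not_flipper_wins2 symG irrG pshX _ (flipper_wins_fw 2 symG); lia.
Qed.

Theorem mainTheorem6 (T : finType) (G : rel T) :
  symmetric G -> irreflexive G ->
  VCdim G <= 8 * fw 1 G /\ twoVCdim G <= 8 * fw 2 G + 2.
Proof.
move=> symG irrG; split; first exact: VCdim_le_fw1.
by rewrite (leq_trans (twoVCdim_le_fw2 symG irrG)) // leq_add2r leq_mul2r orbT.
Qed.
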